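(* With notation as in the context, if $s\in\mathbb{S}_{p^n}$, $t\in\mathbb{S}_{p^n}(h)$ and $s\preceq\mathfrak{a}(t)$, then $\mathfrak{a}(H(s,t))=\mathfrak{a}(t)-s$.
   Context: Let $p$ be a prime, $n\ge1$, $\mathbb{S}_{p^n}=\{0,\dots,p^n-1\}$; write $s\in\mathbb{S}_{p^n}$ as $s=\sum_{i=1}^n s_{(n-i)}p^{n-i}$ with digits in $\{0,\dots,p-1\}$, and $s\preceq t$ means $s_{(n-i)}\le t_{(n-i)}$ for all $i$. Let $b_1,\dots,b_n$ be integers prime to $p$, $\mathfrak{b}(s)=\sum_i s_{(n-i)}p^{n-i}b_i$, and for $t\in\mathbb{Z}$ let $\mathfrak{a}(t)\in\mathbb{S}_{p^n}$ be the unique element with $\mathfrak{b}(\mathfrak{a}(t))\equiv-t\pmod{p^n}$. Let $r:\mathbb{Z}\to\mathbb{S}_{p^n}$ be reduction mod $p^n$. Fix $h\in\mathbb{Z}$, let $\mathbb{S}_{p^n}(h)=\{t\in\mathbb{Z}:h\le t<h+p^n\}$, and for $s\in\mathbb{S}_{p^n}$, $t\in\mathbb{S}_{p^n}(h)$ set $H(s,t)=h+r(\mathfrak{b}(s)+t-h)$. *)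

From mathcomp Require Import all_boot all_order all_algebra.
Set Implicit Arguments. Unset Strict Implicit. Unset Printing Implicit Defensive.
Import Order.TTheory GRing.Theory Num.Theory.

Definition digit (p s j : nat) : nat := (s %/ p ^ j) %% p.

Definition dprec (p n s t : nat) : Prop :=
  forall j, (j < n)%N -> (digit p s j <= digit p t j)%N.

Definition bfrak (p n : nat) (b : nat -> int) (s : nat) : int :=
  \sum_(1 <= i < n.+1) ((digit p s (n - i) * p ^ (n - i))%N%:Z * b i)%R.

(* frak a (t) : the unique element x of S_{p^n} = {0..p^n-1} with
   bfrak x = -t (mod p^n); computed as the least such x (p^n if none). *)
Definition afrak (p n : nat) (b : nat -> int) (t : int) : nat :=
  find (fun x => (bfrak p n b x == - t %[mod (p ^ n)%N%:Z])%Z) (iota 0 (p ^ n)).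

Definition rmod (p n : nat) (x : int) : int := (x %% (p ^ n)%N%:Z)%Z.

Definition Hmap (p n : nat) (b : nat -> int) (h : int) (s : nat) (t : int) : int :=
  (h + rmod p n (bfrak p n b s + t - h))%R.

From mathcomp Require Import all_boot all_order all_algebra.
From mathcomp Require Import zify ring.
Import Order.TTheory GRing.Theory Num.Theory.
Set Implicit Arguments.
Unset Strict Implicit.
Unset Printing Implicit Defensive.
Local Open Scope ring_scope.

(* When the digits of s are bounded by those of a, subtracting s from a
   borrows nowhere, so the linear form bfrak satisfies
   bfrak (a - s) = bfrak a - bfrak s.  With a = afrak t this gives
   bfrak (a - s) = -t - bfrak s = -H (mod p^n).  Since the b_i are prime
   to p, bfrak is injective modulo p^n on {0, ..., p^n - 1} (compare the
   lowest digits, then divide by p), so afrak H = a - s. *)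

Lemma digit0 p x : digit p x 0 = (x %% p)%N.
Proof. by rewrite /digit expn0 divn1. Qed.

Lemma digitS p x j : digit p x j.+1 = digit p (x %/ p) j.
Proof. by rewrite /digit expnS divnMA. Qed.

Lemma digit_expn p n j : (0 < p)%N -> (j < n)%N -> digit p (p ^ n) j = 0%N.
Proof.
move=> p_gt0 ltjn; rewrite /digit -expnB ?(ltnW ltjn) //.
by rewrite -(subnSK ltjn) expnSr modnMl.
Qed.

Lemma ltn_divn_expS p n x : (0 < p)%N -> (x < p ^ n.+1)%N -> (x %/ p < p ^ n)%N.
Proof. by move=> p_gt0; rewrite ltn_divLR // -expnSr. Qed.

Lemma digits_eq0 p n x : (0 < p)%N -> (x < p ^ n)%N ->
  (forall j, (j < n)%N -> digit p x j = 0%N) -> x = 0%N.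
Proof.
move=> p_gt0; elim: n x => [|n IH] x ltx dx0; first by rewrite expn0 in ltx; lia.
have xp0 : (x %/ p = 0)%N.
  by apply: IH; [exact: ltn_divn_expS | move=> j ltj; rewrite -digitS dx0].
by rewrite (divn_eq x p) xp0 -digit0 dx0.
Qed.

Lemma dprec_subn p n a s : (0 < p)%N -> (s < p ^ n)%N -> (a < p ^ n)%N ->
  dprec p n s a ->
  (s <= a)%N /\ forall j, (j < n)%N -> digit p (a - s) j = (digit p a j - digit p s j)%N.
Proof.
move=> p_gt0; elim: n a s => [|n IH] a s lts lta sa.
  by rewrite expn0 in lts lta; split => //; lia.
have [le_sa_p digitB] : (s %/ p <= a %/ p)%N /\ forall j, (j < n)%N ->
    digit p (a %/ p - s %/ p) j = (digit p (a %/ p) j - digit p (s %/ p) j)%N.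
  apply: IH; rewrite ?ltn_divn_expS // => j ltj.
  by rewrite -!digitS; apply: sa.
have le_sa0 := sa 0%N isT; rewrite !digit0 in le_sa0.
have ltap : (a %% p < p)%N by rewrite ltn_mod.
have le_sa_pp : (s %/ p * p <= a %/ p * p)%N by rewrite leq_mul2r le_sa_p orbT.
have a_s : (a - s = (a %/ p - s %/ p) * p + (a %% p - s %% p))%N.
  rewrite mulnBl; move: (divn_eq a p) (divn_eq s p) le_sa_pp le_sa0.
  move: (a %/ p * p)%N (s %/ p * p)%N (a %% p)%N (s %% p)%N => u v w z; lia.
have ltp : (a %% p - s %% p < p)%N := leq_ltn_trans (leq_subr _ _) ltap.
split.
  rewrite (divn_eq a p) (divn_eq s p); move: le_sa_pp le_sa0.
  move: (a %/ p * p)%N (s %/ p * p)%N (a %% p)%N (s %% p)%N => u v w z; lia.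
case=> [|j] ltj; first by rewrite !digit0 a_s modnMDl modn_small.
by rewrite !digitS a_s divnMDl // (divn_small ltp) addn0 digitB.
Qed.

Definition weighted_digits (p : nat) (c : nat -> int) (n x : nat) : int :=
  \sum_(0 <= k < n) ((digit p x k * p ^ k)%N%:Z * c k).

Lemma bfrak_weighted_digits p n b x :
  bfrak p n b x = weighted_digits p (fun k => b (n - k)%N) n x.
Proof.
rewrite /bfrak /weighted_digits (big_addn 0 n.+1 1) subn1 /= big_nat_rev /=.
apply: eq_big_nat => i /andP[_ ltin].
by rewrite (_ : 0 + n - i.+1 + 1 = n - i)%N ?subKn //; [exact: ltnW | lia].
Qed.

Lemma weighted_digitsS p c n x : weighted_digits p c n.+1 x =
  (x %% p)%N%:Z * c 0%N + p%:Z * weighted_digits p (fun k => c k.+1) n (x %/ p).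
Proof.
rewrite /weighted_digits big_nat_recl // digit0 expn0 muln1; congr (_ + _).
rewrite big_distrr; apply: eq_bigr => k _ /=.
rewrite digitS expnS !PoszM; ring.
Qed.

Lemma weighted_digitsB p c n a s : (0 < p)%N ->
  (s < p ^ n)%N -> (a < p ^ n)%N -> dprec p n s a ->
  weighted_digits p c n (a - s) = weighted_digits p c n a - weighted_digits p c n s.
Proof.
move=> p_gt0 lts lta sa; have [_ digitB] := dprec_subn p_gt0 lts lta sa.
rewrite /weighted_digits -sumrB; apply: eq_big_nat => k /andP[_ ltk].
by rewrite digitB // mulnBl -subzn ?mulrBl // leq_mul2r sa ?orbT.
Qed.

Lemma weighted_digits_inj_mod p n c x y : prime p ->
  (forall k, (k < n)%N -> coprimez (c k) p) ->
  (x < p ^ n)%N -> (y < p ^ n)%N ->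
  (weighted_digits p c n x == weighted_digits p c n y %[mod (p ^ n)%N])%Z -> x = y.
Proof.
move=> p_pr; have p_gt0 := prime_gt0 p_pr.
elim: n c x y => [|n IH] c x y cop ltx lty; first by rewrite expn0 in ltx lty; lia.
rewrite eqz_mod_dvd !weighted_digitsS.
set X := weighted_digits _ _ _ (x %/ p); set Y := weighted_digits _ _ _ (y %/ p).
rewrite (_ : _ - _ = ((x %% p)%N%:Z - (y %% p)%N%:Z) * c 0%N + p%:Z * (X - Y));
  last by ring.
move=> dvd_pn.
have dvd_low : (p%:Z %| ((x %% p)%N%:Z - (y %% p)%N%:Z) * c 0%N)%Z.
  have dvd_p : (p%:Z %| (p ^ n.+1)%N%:Z)%Z by rewrite expnS PoszM dvdz_mulr.
  have dvd_diff := rpredB (dvdz_trans dvd_p dvd_pn) (dvdz_mulr (X - Y) (dvdzz p%:Z)).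
  by rewrite addrK in dvd_diff.
have cop0 : coprimez p (c 0%N) by rewrite coprimez_sym cop.
rewrite (Gauss_dvdzl _ cop0) -eqz_mod_dvd !modz_nat !modn_mod in dvd_low.
have eq_low : (x %% p = y %% p)%N by apply/eqP; rewrite -eqz_nat.
rewrite eq_low subrr mul0r add0r expnS PoszM dvdz_mul2l ?eqz_nat -?lt0n // in dvd_pn.
have eq_high : (x %/ p = y %/ p)%N.
  apply: (IH (fun k => c k.+1)); rewrite ?ltn_divn_expS //; first by move=> k ltk; apply: cop.
  by rewrite eqz_mod_dvd.
by rewrite (divn_eq x p) (divn_eq y p) eq_high eq_low.
Qed.

Lemma find_iota_unique (P : pred nat) m x : (x < m)%N -> P x ->
  (forall y, (y < m)%N -> P y -> y = x) -> find P (iota 0 m) = x.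
Proof.
move=> ltx Px uniqP; have hasP : has P (iota 0 m).
  by apply/hasP; exists x; rewrite ?mem_iota.
have ltf : (find P (iota 0 m) < m)%N by move: hasP; rewrite has_find size_iota.
apply: uniqP => //; by have := nth_find 0%N hasP; rewrite nth_iota // add0n.
Qed.

Section Bfrak.

Variables (p n : nat) (b : nat -> int).
Hypothesis p_pr : prime p.
Hypothesis b_coprime : forall i, (1 <= i <= n)%N -> coprimez (b i) p%:Z.

Let p_gt0 : (0 < p)%N := prime_gt0 p_pr.

Lemma bfrak0 : bfrak p n b 0 = 0.
Proof. by rewrite /bfrak big1 // => i _; rewrite /digit div0n mod0n mul0n mul0r. Qed.

Lemma bfrakB a s : (s < p ^ n)%N -> (a < p ^ n)%N -> dprec p n s a ->
  bfrak p n b (a - s) = bfrak p n b a - bfrak p n b s.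
Proof. by move=> *; rewrite !bfrak_weighted_digits weighted_digitsB. Qed.

Lemma bfrak_inj_mod x y : (x < p ^ n)%N -> (y < p ^ n)%N ->
  (bfrak p n b x == bfrak p n b y %[mod (p ^ n)%N])%Z -> x = y.
Proof.
rewrite !bfrak_weighted_digits; apply: weighted_digits_inj_mod => // k ltk.
by apply: b_coprime; lia.
Qed.

Lemma afrak_le t : (afrak p n b t <= p ^ n)%N.
Proof. by rewrite /afrak; apply: leq_trans (find_size _ _) _; rewrite size_iota. Qed.

Lemma afrak_mod t : (afrak p n b t < p ^ n)%N ->
  (bfrak p n b (afrak p n b t) == - t %[mod (p ^ n)%N])%Z.
Proof.
move=> lta; have hasP : has (fun x => bfrak p n b x == - t %[mod (p ^ n)%N])%Z (iota 0 (p ^ n)).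
  by rewrite has_find size_iota.
by have := nth_find 0%N hasP; rewrite nth_iota // add0n.
Qed.

Lemma afrak_unique t x : (x < p ^ n)%N ->
  (bfrak p n b x == - t %[mod (p ^ n)%N])%Z -> afrak p n b t = x.
Proof.
move=> ltx bx; apply: find_iota_unique => // y lty /eqP b_y.
by apply: bfrak_inj_mod => //; rewrite (eqP bx) b_y.
Qed.

End Bfrak.

Lemma Hmap_mod p n b h s t :
  (Hmap p n b h s t == bfrak p n b s + t %[mod (p ^ n)%N])%Z.
Proof.
by rewrite /Hmap /rmod -modzDmr modz_mod modzDmr addrC subrK.
Qed.

Theorem proposition3p11 (p n : nat) (b : nat -> int) (h : int) (s : nat) (t : int) :
  prime p -> (1 <= n)%N ->
  (forall i, (1 <= i <= n)%N -> coprimez (b i) p%:Z) ->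
  (s < p ^ n)%N ->
  (h <= t)%R -> (t < h + (p ^ n)%N%:Z)%R ->
  dprec p n s (afrak p n b t) ->
  (afrak p n b (Hmap p n b h s t))%:Z = ((afrak p n b t)%:Z - s%:Z)%R.
Proof.
move=> p_pr _ b_cop lts le_ht lt_th s_a; have p_gt0 := prime_gt0 p_pr.
have [a_eq | a_neq] := eqVneq (afrak p n b t) (p ^ n)%N.
  (* afrak t = p ^ n is the junk value for "no solution"; then s = 0 and H = t. *)
  have s0 : s = 0%N.
    apply: (digits_eq0 p_gt0 lts) => j ltj.
    by apply/eqP; rewrite -leqn0 -(digit_expn p_gt0 ltj) -a_eq s_a.
  rewrite s0 subr0 /Hmap /rmod bfrak0 add0r modz_small ?subrKC //.
  by rewrite subr_ge0 le_ht ltrBlDl.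
have lta : (afrak p n b t < p ^ n)%N by rewrite ltn_neqAle a_neq afrak_le.
have [le_sa _] := dprec_subn p_gt0 lts lta s_a.
rewrite subzn //; congr Posz.
apply: (afrak_unique p_pr b_cop (leq_ltn_trans (leq_subr _ _) lta)).
rewrite bfrakB // -modzDml (eqP (afrak_mod lta)) modzDml.
rewrite -modzNm (eqP (Hmap_mod _ _ _ _ _ _)) modzNm.
by apply/eqP; congr (_ %% _)%Z; ring.
Qed.
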